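(* Let $n\ge 6$ be even. If $n\equiv 0\pmod 4$, there are exactly $n+2$ circulant Latin squares of order $n$ with inner distance $\frac n2-1$ and symbol $1$ in cell $(1,1)$, and exactly $n+2$ such back-circulant Latin squares. If $n\equiv 2\pmod 4$, there are exactly $n$ of each type.
   Context: Symbols are $[1,n]$; $\mathrm{dist}(a,b)$ is the minimum of the residues of $a-b$ and $b-a$ modulo $n$ (in $[0,n-1]$). A Latin square of order $n$ is an $n\times n$ matrix over $[1,n]$ with each symbol exactly once in every row and column; its inner distance is the minimum of $\mathrm{dist}$ over symbols in horizontally or vertically adjacent cells. A circulant Latin square is one in which each row $i+1$ is row $i$ cyclically shifted one position to the right; a back-circulant Latin square is one in which each row $i+1$ is row $i$ cyclically shifted one position to the left. *)

From mathcomp Require Import all_boot all_order all_algebra.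
Set Implicit Arguments. Unset Strict Implicit. Unset Printing Implicit Defensive.

(* Convention: a square of order n is a matrix L : 'M['I_n]_n.
   Row/column index i : 'I_n stands for row/column i+1, and an entry
   k : 'I_n stands for the symbol k+1 in [1,n]. *)

(* dist(a,b) = min of the residues of a-b and b-a modulo n (in [0,n-1]),
   for a, b < n (shifting both symbols by 1 changes nothing). *)
Definition sdist (n a b : nat) : nat :=
  minn ((a + n - b) %% n) ((b + n - a) %% n).

(* Latin square: every symbol exactly once in every row and column
   (equivalently, since there are n cells per line and n symbols,
   each row and each column is injective). *)
Definition latin (n : nat) (L : 'M['I_n]_n) : bool :=
  [forall i, injectiveb (fun j => L i j)] &&
  [forall j, injectiveb (fun i => L i j)].

(* Inner distance: minimum of sdist over horizontally or vertically
   adjacent cells. (The default value n of the min is never attained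
   when n >= 2, since sdist < n and adjacent pairs exist.) *)
Definition inner_distance (n : nat) (L : 'M['I_n]_n) : nat :=
  \big[minn/n]_(i : 'I_n) \big[minn/n]_(j : 'I_n)
    minn (\big[minn/n]_(j' : 'I_n | val j' == j.+1) sdist n (L i j) (L i j'))
         (\big[minn/n]_(i' : 'I_n | val i' == i.+1) sdist n (L i j) (L i' j)).

Definition circulant (n : nat) (L : 'M['I_n]_n) : bool :=
  [forall i, forall i', forall j, forall j',
     ((val i' == (val i).+1) && (val j' == (val j).+1 %% n)) ==>
     (L i' j' == L i j)].

Definition back_circulant (n : nat) (L : 'M['I_n]_n) : bool :=
  [forall i, forall i', forall j, forall j',
     ((val i' == (val i).+1) && (val j' == (val j).+1 %% n)) ==>
     (L i' j == L i j')].

Definition one_at_corner (n : nat) (L : 'M['I_n]_n) : bool :=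
  [forall i, forall j, ((val i == 0) && (val j == 0)) ==> (val (L i j) == 0)].

(* A circulant or back-circulant square is determined by its first row f, a
   permutation of Z_n with f(0) = 0, and its adjacent cells carry exactly the
   cyclically consecutive pairs (f(k), f(k+1)).  Write n = 2m.  Inner distance
   m - 1 means f(k+1) - f(k) = m + e_k (mod n) with e_k in {-1, 0, 1}, so that
   f(k) = k m + W(k) (mod n) for the walk W of partial sums of e.  Injectivity
   of f forbids e_k + e_(k+1) = 0, and forbids three positions of one period
   whose values of W are congruent modulo m.  Followed from a maximum, which
   sits at a zero step, the walk is then forced to be a rotation of
   0, -1, ..., -1, 0, 1, ..., 1 (2m choices), unless e has no zero; then e is
   constant 1 or -1, which gives a permutation exactly when m is even.  Each of
   these step sequences yields exactly one square of each kind. *)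

From Stdlib Require Import ZArith Lia.
From mathcomp Require Import all_boot all_order matrix zify.

(** * Walks *)

Fixpoint walk (e : nat -> Z) (k : nat) : Z :=
  if k is k'.+1 then (walk e k' + e k')%Z else 0%Z.

Lemma walkS e k : walk e k.+1 = (walk e k + e k)%Z.
Proof. by []. Qed.

Lemma eq_walk e e' k : (forall i, (i < k)%N -> e i = e' i) -> walk e k = walk e' k.
Proof.
elim: k => [//|k IH] ee'; rewrite !walkS ee' // IH // => i lt_ik.
by apply: ee'; apply: ltnW.
Qed.

Lemma walk_shift e c k : walk (fun i => e (i + c)%N) k = (walk e (k + c) - walk e c)%Z.
Proof.
elim: k => [|k IH]; first by rewrite add0n /=; lia.
by rewrite addSn !walkS IH; lia.
Qed.

Lemma walk_const z k : walk (fun=> z) k = (Z.of_nat k * z)%Z.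
Proof. by elim: k => [|k IH] //; rewrite walkS IH; nia. Qed.

Lemma Zmult_small_eq0 (x t N : Z) : (- N < x < N)%Z -> x = (t * N)%Z -> x = 0%Z.
Proof. by move=> + x_eq; subst x; case: (Z.lt_total t 0) => [|[->|]]; nia. Qed.

Lemma periodic_modn {T : Type} {f : nat -> T} {c : nat} :
  (forall k, f (k + c)%N = f k) -> forall k, f k = f (k %% c).
Proof.
move=> fc k; rewrite {1}(divn_eq k c) addnC.
by elim: (k %/ c) => [|q IH]; rewrite ?mul0n ?addn0 // mulSn addnA addnAC fc.
Qed.

Lemma modn_window_neq d k l : (k < l < k + d)%N -> k %% d <> l %% d.
Proof.
move=> /andP [lt_kl lt_lkd] E.
have : (k + (l - k) == k + 0 %[mod d]) by rewrite addn0 subnKC ?E // ltnW.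
by rewrite eqn_modDl mod0n modn_small; lia.
Qed.

Lemma walk_add_period e c : (forall k, e (k + c)%N = e k) ->
  forall k, walk e (k + c) = (walk e k + walk e c)%Z.
Proof.
move=> ec; elim=> [|k IH]; first by rewrite add0n /=; lia.
by rewrite addSn !walkS IH ec; lia.
Qed.

Lemma exists_argmax (f : nat -> Z) N :
  exists2 p, (p <= N)%N & forall k, (k <= N)%N -> (f k <= f p)%Z.
Proof.
elim: N => [|N [p le_pN max_p]]; first by exists 0%N => // k; rewrite leqn0 => /eqP ->; lia.
have [le_fN|lt_fN] := Z.le_gt_cases (f N.+1) (f p).
  exists p => [|k]; first lia.
  by rewrite leq_eqVlt ltnS => /orP [/eqP ->|/max_p].
exists N.+1 => // k; rewrite leq_eqVlt ltnS => /orP [/eqP ->|/max_p]; lia.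
Qed.

Section BoundedWalk.
Variable e : nat -> Z.
Hypothesis e_bounded : forall k, (-1 <= e k <= 1)%Z.

Lemma walk_ivt a b v : (a <= b)%N -> (walk e a <= v <= walk e b)%Z ->
  exists2 t, (a <= t <= b)%N & walk e t = v.
Proof.
elim: b => [|b IH] le_ab v_in.
  by exists 0%N; move: le_ab v_in; rewrite leqn0 => /eqP -> /=; lia.
have [lt_ba|le_ab'] := ltnP b a.
  have ab : a = b.+1 by lia.
  by exists b.+1; subst a; lia.
have [le_vb|gt_vb] := Z.le_gt_cases v (walk e b).
  by have [t t_in wt] := IH le_ab' (conj (proj1 v_in) le_vb); exists t => //; lia.
by exists b.+1 => //; move: v_in; rewrite walkS; have := e_bounded b; lia.
Qed.

Lemma walk_bounded k : (- Z.of_nat k <= walk e k <= Z.of_nat k)%Z.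
Proof. by elim: k => [//|k IH]; rewrite walkS; have := e_bounded k; lia. Qed.

Lemma walk_bounded_zero j k : (j < k)%N -> e j = 0%Z ->
  (- Z.of_nat k < walk e k < Z.of_nat k)%Z.
Proof.
move=> + ej0; elim: k => [//|k IH]; rewrite ltnS leq_eqVlt walkS.
case/orP=> [/eqP <-|/IH]; first by rewrite ej0; have := walk_bounded j; lia.
by have := e_bounded k; lia.
Qed.

End BoundedWalk.

(** * Admissible step sequences *)

(* If [e] is the step sequence [excess f] of a row [f], then [f k = pos m e k]
   modulo [2 m]. *)
Definition pos (m : nat) (e : nat -> Z) (k : nat) : Z :=
  (Z.of_nat k * Z.of_nat m + walk e k)%Z.

Definition admissible (m : nat) (e : nat -> Z) : Prop :=
  [/\ forall k, (-1 <= e k <= 1)%Z, forall k, e (k + 2 * m)%N = e k,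
      forall k l, (k < l < k + 2 * m)%N -> ~ (2 * Z.of_nat m | pos m e l - pos m e k)%Z &
      (2 * Z.of_nat m | walk e (2 * m))%Z].

Definition pattern_base (m j : nat) : Z :=
  if j == 0%N then 0%Z else if (j < m)%N then (-1)%Z else if j == m then 0%Z else 1%Z.

(* The steps [0, -1, ..., -1, 0, 1, ..., 1], with [m - 1] copies of each sign,
   rotated to start at position [p]. *)
Definition pattern (m p k : nat) : Z := pattern_base m ((k + (2 * m - p)) %% (2 * m)).

Lemma pattern_baseP m j : (j < 2 * m)%N ->
  [\/ j = 0%N /\ pattern_base m j = 0%Z,
      (0 < j < m)%N /\ pattern_base m j = (-1)%Z,
      j = m /\ pattern_base m j = 0%Z |
      (m < j)%N /\ pattern_base m j = 1%Z].
Proof.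
rewrite /pattern_base => lt_j; case: eqP => [|/eqP j0]; first by constructor 1.
case: ltnP => [lt_jm|le_mj]; first by constructor 2; split=> //; lia.
by case: eqP => [|/eqP jm]; [constructor 3|constructor 4; split=> //; lia].
Qed.

Section StepClassification.
Variables (m : nat) (e : nat -> Z).
Hypothesis m_ge3 : (3 <= m)%N.
Hypothesis e_adm : admissible m e.
Hypothesis walk_onto : forall y, exists2 k, (k < 2 * m)%N & (Z.of_nat m | walk e k - y)%Z.

Let e_bounded : forall k, (-1 <= e k <= 1)%Z. Proof. by case: e_adm. Defined.
Let e_periodic : forall k, e (k + 2 * m)%N = e k. Proof. by case: e_adm. Defined.
Let pos_inj : forall k l, (k < l < k + 2 * m)%N ->
  ~ (2 * Z.of_nat m | pos m e l - pos m e k)%Z.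
Proof. by case: e_adm. Defined.
Let walk_period : (2 * Z.of_nat m | walk e (2 * m))%Z. Proof. by case: e_adm. Defined.

Lemma steps_no_cancel k : (e k + e k.+1 <> 0)%Z.
Proof.
move=> cancel; apply: (pos_inj k k.+2); first lia.
by exists 1%Z; rewrite /pos !walkS; lia.
Qed.

Lemma steps_values k : [\/ e k = (-1)%Z, e k = 0%Z | e k = 1%Z].
Proof.
have := e_bounded k; case: (Z.lt_total (e k) 0) => [|[]] ? ?;
  by [constructor 1; lia|constructor 2|constructor 3; lia].
Qed.

(* The three differences of the [pos] values are multiples of [m] and one of
   them is an even multiple, since the third is the difference of the other two. *)
Lemma no_three_congruent k1 k2 k3 : (k1 < k2 < k3)%N -> (k3 < k1 + 2 * m)%N ->
  (Z.of_nat m | walk e k2 - walk e k1)%Z -> (Z.of_nat m | walk e k3 - walk e k1)%Z -> False.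
Proof.
move=> lt_k123 lt_k31 [w1 E1] [w2 E2].
set x1 := (Z.of_nat k2 - Z.of_nat k1 + w1)%Z; set x2 := (Z.of_nat k3 - Z.of_nat k1 + w2)%Z.
have D1 : (pos m e k2 - pos m e k1 = x1 * Z.of_nat m)%Z by rewrite /pos /x1; nia.
have D2 : (pos m e k3 - pos m e k1 = x2 * Z.of_nat m)%Z by rewrite /pos /x2; nia.
have [[y1 Ey1]|[y1 Ey1]] := Z.Even_or_Odd x1.
  by apply: (pos_inj k1 k2); [lia|exists y1; rewrite D1 Ey1; ring].
have [[y2 Ey2]|[y2 Ey2]] := Z.Even_or_Odd x2.
  by apply: (pos_inj k1 k3); [lia|exists y2; rewrite D2 Ey2; ring].
apply: (pos_inj k2 k3); first lia.
exists (y2 - y1)%Z.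
have -> : (pos m e k3 - pos m e k2 = x2 * Z.of_nat m - x1 * Z.of_nat m)%Z by lia.
by rewrite Ey1 Ey2; ring.
Qed.

Section ZeroStep.
Hypothesis e_zero : exists2 j, (j < 2 * m)%N & e j = 0%Z.

Lemma walk_period_zero : walk e (2 * m) = 0%Z.
Proof.
have [j lt_j ej0] := e_zero; have := walk_bounded_zero e e_bounded j (2 * m) lt_j ej0.
by case: walk_period => q ->; case: (Z.lt_total q 0) => [|[->|]]; nia.
Qed.

Lemma walk_periodic k : walk e (k + 2 * m) = walk e k.
Proof. by rewrite walk_add_period // walk_period_zero Z.add_0_r. Qed.

(* At a maximum a step [1] followed by [-1] is excluded, so one of them is [0]. *)
Lemma walk_max_zero_step :
  exists2 p, (p < 2 * m)%N & e p = 0%Z /\ forall k, (walk e k <= walk e p)%Z.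
Proof.
have [p0 le_p0 max_p0] := exists_argmax (walk e) (2 * m - 1).
have walk_max k : (walk e k <= walk e p0)%Z.
  rewrite (periodic_modn walk_periodic); apply: max_p0.
  by have := ltn_pmod k (_ : 0 < 2 * m)%N; lia.
set r := (p0 + 2 * m - 1)%N.
have wr1 : walk e r.+1 = walk e p0 by rewrite (_ : r.+1 = p0 + 2 * m)%N ?walk_periodic //; lia.
have [q [eq0 wq]] : exists q, e q = 0%Z /\ walk e q = walk e p0.
  have er_ge0 : (0 <= e r)%Z by have := walk_max r; rewrite -wr1 walkS; lia.
  have er1_le0 : (e r.+1 <= 0)%Z by have := walk_max r.+2; rewrite walkS wr1; lia.
  case: (steps_values r.+1) => er1; [|by exists r.+1|lia].
  case: (steps_values r) => er; [lia| |by have := steps_no_cancel r; lia].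
  by exists r; split=> //; move: wr1; rewrite walkS er; lia.
exists (q %% (2 * m)); first by rewrite ltn_pmod //; lia.
by rewrite -(periodic_modn e_periodic) -(periodic_modn walk_periodic) wq.
Qed.

Variable p : nat.
Hypothesis p_lt : (p < 2 * m)%N.
Hypothesis e_p : e p = 0%Z.
Hypothesis walk_max : forall k, (walk e k <= walk e p)%Z.

Lemma walk_in_period k : exists2 t, (p <= t < p + 2 * m)%N & walk e t = walk e k.
Proof.
have lt_k : (k %% (2 * m) < 2 * m)%N by rewrite ltn_pmod //; lia.
rewrite (periodic_modn walk_periodic k).
have [lt_kp|le_pk] := ltnP (k %% (2 * m)) p; last by exists (k %% (2 * m)) => //; lia.
by exists (k %% (2 * m) + 2 * m)%N; rewrite ?walk_periodic //; lia.
Qed.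

(* Some value [walk e k - 1 (mod m)] is taken below the flat step; on its way
   back up to the maximum the walk takes the value [walk e k] a third time. *)
Lemma no_flat_step_below_max k : (p < k)%N -> walk e k.+1 = walk e k ->
  (walk e p - Z.of_nat m + 1 < walk e k < walk e p)%Z ->
  (forall t, (p <= t <= k.+1)%N -> (walk e k <= walk e t)%Z) -> False.
Proof.
move=> lt_pk flat [lo hi] above.
have [k0 _ [w Ew]] := walk_onto (walk e k - 1).
have [t0 /andP [le_pt0 lt_t0] wt0] := walk_in_period k0.
have below : (walk e t0 < walk e k)%Z.
  by have := walk_max t0; rewrite wt0; case: (Z.le_gt_cases w 0); nia.
have lt_kt0 : (k.+1 < t0)%N by rewrite ltnNge; apply/negP => le_t0k; have := above t0; lia.
have [t /andP [le_t0t le_tp] wt] :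
    exists2 t, (t0 <= t <= p + 2 * m)%N & walk e t = walk e k.
  by apply: walk_ivt => //; [exact: ltnW|rewrite walk_periodic; lia].
have lt_tp : (t < p + 2 * m)%N.
  by rewrite ltn_neqAle le_tp andbT; apply/eqP => tp; move: wt; rewrite tp walk_periodic; lia.
by apply: (no_three_congruent k k.+1 t); [lia|lia|exists 0%Z; lia|exists 0%Z; lia].
Qed.

Lemma walk_descent i : (i < m)%N ->
  forall j, (j <= i)%N -> walk e (p + j.+1) = (walk e p - Z.of_nat j)%Z.
Proof.
elim: i => [_ j|i IH lt_im j]; first by rewrite leqn0 => /eqP ->; rewrite addn1 walkS e_p; lia.
rewrite leq_eqVlt ltnS => /orP [/eqP ->|]; last by apply: IH; lia.
have IHi := IH (ltnW lt_im).
rewrite addnS walkS IHi //; suff : e (p + i.+1) = (-1)%Z by lia.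
case: (steps_values (p + i.+1)) => // e_i1; exfalso.
- have [i0|i_gt0] := posnP i.
    by subst i; apply: (steps_no_cancel p); rewrite -addn1 e_p e_i1.
  have flat : walk e (p + i.+1).+1 = walk e (p + i.+1) by rewrite walkS e_i1; lia.
  apply: (no_flat_step_below_max (p + i.+1)) => //; first lia.
    by rewrite IHi //; lia.
  move=> t /andP [le_pt]; rewrite leq_eqVlt ltnS => /orP [/eqP ->|le_t]; first lia.
  rewrite IHi // -(subnKC le_pt); have : (t - p <= i.+1)%N by lia.
  by case: (t - p) => [|d] le_d; rewrite ?addn0 ?IHi; lia.
- have [i0|i_gt0] := posnP i.
    by subst i; have := walk_max (p + 2); rewrite (addnS p 1) walkS IHi // e_i1; lia.
  apply: (steps_no_cancel (p + i)); rewrite -addnS e_i1.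
  by move: (IHi i (leqnn i)); rewrite addnS walkS (_ : p + i = p + i.-1.+1)%N ?IHi; lia.
Qed.

Lemma e_descent j : (0 < j < m)%N -> e (p + j) = (-1)%Z.
Proof.
move=> /andP [j_gt0 lt_jm]; have := walk_descent j lt_jm j (leqnn j).
have -> : walk e (p + j.+1) = (walk e (p + j) + e (p + j))%Z by rewrite addnS.
by rewrite -{1}(ltn_predK j_gt0) (walk_descent j lt_jm _ (leq_pred j)); lia.
Qed.

Lemma walk_antipode : walk e (p + m) = (walk e p - Z.of_nat m + 1)%Z.
Proof. by rewrite -{1}(ltn_predK m_ge3) (walk_descent m.-1) ?leq_pred ?ltn_pred //; lia. Qed.

Lemma e_antipode : e (p + m) = 0%Z.
Proof.
case: (steps_values (p + m)) => // epm; exfalso.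
- apply: (no_three_congruent p p.+1 (p + m).+1); [lia|lia|exists 0%Z|exists (-1)%Z];
    by rewrite ?walkS ?walk_antipode ?epm ?e_p; lia.
- by apply: (steps_no_cancel (p + m.-1)); rewrite e_descent -?addnS ?(ltn_predK m_ge3) ?epm; lia.
Qed.

Lemma walk_ascent i : (i < m)%N ->
  forall j, (j <= i)%N -> walk e (p + m + j.+1) = (walk e p - Z.of_nat m + 1 + Z.of_nat j)%Z.
Proof.
elim: i => [_ j|i IH lt_im j].
  by rewrite leqn0 => /eqP ->; rewrite addn1 walkS e_antipode walk_antipode; lia.
rewrite leq_eqVlt ltnS => /orP [/eqP ->|]; last by apply: IH; lia.
have IHi := IH (ltnW lt_im).
rewrite addnS walkS IHi //; suff : e (p + m + i.+1) = 1%Z by lia.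
case: (steps_values (p + m + i.+1)) => // e_i1; exfalso.
- have [i0|i_gt0] := posnP i.
    subst i; apply: (no_three_congruent p p.+1 (p + m + 2)); [lia|lia|exists 0%Z|exists (-1)%Z].
      by rewrite walkS e_p; lia.
    by rewrite (addnS _ 1) walkS IHi // e_i1; lia.
  apply: (steps_no_cancel (p + m + i)); rewrite -addnS e_i1.
  by move: (IHi i (leqnn i)); rewrite addnS walkS (_ : p + m + i = p + m + i.-1.+1)%N ?IHi; lia.
- have [i0|i_gt0] := posnP i.
    by subst i; apply: (steps_no_cancel (p + m)); rewrite -addn1 e_antipode e_i1.
  have wd : walk e (p + (m - i)) = (walk e p - Z.of_nat (m - i.+1))%Z.
    by rewrite (_ : m - i = (m - i.+1).+1)%N ?(walk_descent m.-1) //; lia.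
  apply: (no_three_congruent (p + (m - i)) (p + m + i.+1) (p + m + i.+2));
    [lia|lia|exists 0%Z|exists 0%Z].
  + by rewrite IHi // wd; lia.
  + by rewrite (addnS _ i.+1) walkS e_i1 IHi // wd; lia.
Qed.

Lemma e_ascent j : (0 < j < m)%N -> e (p + m + j) = 1%Z.
Proof.
move=> /andP [j_gt0 lt_jm]; have := walk_ascent j lt_jm j (leqnn j).
have -> : walk e (p + m + j.+1) = (walk e (p + m + j) + e (p + m + j))%Z by rewrite addnS.
by rewrite -{1}(ltn_predK j_gt0) (walk_ascent j lt_jm _ (leq_pred j)); lia.
Qed.

Lemma steps_eq_pattern k : e k = pattern m p k.
Proof.
rewrite /pattern; set j := ((k + (2 * m - p)) %% (2 * m))%N.
have -> : e k = e (p + j).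
  rewrite (periodic_modn e_periodic k) (periodic_modn e_periodic (p + j)) modnDmr.
  by rewrite addnCA subnKC ?modnDr //; lia.
have lt_j : (j < 2 * m)%N by rewrite ltn_pmod //; lia.
case: (pattern_baseP m j lt_j) => [[-> ->]|[j_in ->]|[-> ->]|[lt_mj ->]].
- by rewrite addn0.
- exact: e_descent.
- exact: e_antipode.
- by rewrite -(subnKC (ltnW lt_mj)) addnA e_ascent //; lia.
Qed.

End ZeroStep.

Theorem steps_classification :
  [\/ forall k, e k = 1%Z, forall k, e k = (-1)%Z |
       exists2 p, (p < 2 * m)%N & forall k, e k = pattern m p k].
Proof.
case: (boolP [exists j : 'I_(2 * m), Z.eqb (e j) 0]) => [/existsP [j /Z.eqb_spec ej0]|no_zero].
  have e_zero : exists2 j, (j < 2 * m)%N & e j = 0%Z by exists j.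
  have [p lt_p [e_p walk_max]] := walk_max_zero_step e_zero.
  by constructor 3; exists p => // k; apply: (steps_eq_pattern e_zero).
have e_nz k : e k <> 0%Z.
  have m2_gt0 : (0 < 2 * m)%N by lia.
  move=> ek0; move/existsP: no_zero; apply; exists (Ordinal (ltn_pmod k m2_gt0)).
  by rewrite /= -(periodic_modn e_periodic) ek0.
have e_const k : e k = e 0%N.
  elim: k => [//|k <-]; have := steps_no_cancel k; have := e_nz k; have := e_nz k.+1.
  by have := e_bounded k; have := e_bounded k.+1; lia.
case: (steps_values 0) => [e0|/e_nz //|e0]; [constructor 2|constructor 1] => k; by rewrite e_const.
Qed.

End StepClassification.

Section Patterns.
Variable m : nat.
Hypothesis m_ge3 : (3 <= m)%N.

Let e0 := pattern m 0.

Lemma pattern_shift p k : (p < 2 * m)%N -> pattern m p k = e0 (k + (2 * m - p)).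
Proof. by move=> lt_p; rewrite /e0 /pattern subn0 modnDr. Qed.

Lemma walk_pattern0 j : (j <= 2 * m)%N ->
  walk e0 j = (if j == 0%N then 0 else if (j <= m)%N then 1 - Z.of_nat j
               else Z.of_nat j - 2 * Z.of_nat m)%Z.
Proof.
elim: j => [//|j IH] le_j; rewrite walkS IH; last lia.
have lt_j : (j < 2 * m)%N by lia.
rewrite /e0 /pattern subn0 modnDr modn_small //.
case: (pattern_baseP m j lt_j) => [[-> ->]|[? ->]|[-> ->]|[? ->]].
- by rewrite (_ : (0 < m)%N = true) /=; lia.
all: by repeat case: ifP => ?; lia.
Qed.

Lemma pattern_periodic p k : pattern m p (k + 2 * m) = pattern m p k.
Proof. by rewrite /pattern -addnA (addnC (2 * m)) addnA modnDr. Qed.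

Lemma pattern_bounded p k : (-1 <= pattern m p k <= 1)%Z.
Proof.
have lt_j : ((k + (2 * m - p)) %% (2 * m) < 2 * m)%N by rewrite ltn_pmod //; lia.
by rewrite /pattern; case: (pattern_baseP m _ lt_j) => [] [_ ->]; lia.
Qed.

Lemma walk_pattern0_periodic k : walk e0 (k + 2 * m) = walk e0 k.
Proof.
rewrite walk_add_period; last exact: pattern_periodic.
by rewrite (walk_pattern0 (2 * m)) //; repeat case: ifP => ?; lia.
Qed.

Lemma pos_pattern0_mod k : (2 * Z.of_nat m | pos m e0 k - pos m e0 (k %% (2 * m)))%Z.
Proof.
exists (Z.of_nat (k %/ (2 * m)) * Z.of_nat m)%Z.
by rewrite /pos -(periodic_modn walk_pattern0_periodic k); have := divn_eq k (2 * m); nia.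
Qed.

(* Equal walk values inside one period occur only at positions of opposite parity. *)
Lemma pos_pattern0_period_inj a b : (a < b < 2 * m)%N ->
  ~ (2 * Z.of_nat m | pos m e0 b - pos m e0 a)%Z.
Proof.
move=> lt_ab [q Eq].
have wa := walk_pattern0 a; have wb := walk_pattern0 b.
have walk_ab : (walk e0 b - walk e0 a = 0)%Z.
  apply: (Zmult_small_eq0 _ (2 * q - (Z.of_nat b - Z.of_nat a)) (Z.of_nat m)); last first.
    by rewrite /pos in Eq; nia.
  by rewrite wa ?wb; try lia; repeat case: ifP => ?; lia.
have : ((Z.of_nat b - Z.of_nat a - 2 * q) * Z.of_nat m = 0)%Z by rewrite /pos in Eq; nia.
case/Z.mul_eq_0 => [ab_even|]; last lia.
by move: walk_ab; rewrite wa ?wb; try lia; repeat case: ifP => ?; lia.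
Qed.

Lemma pos_pattern0_inj k l : (k < l < k + 2 * m)%N ->
  ~ (2 * Z.of_nat m | pos m e0 l - pos m e0 k)%Z.
Proof.
move=> lt_kl div_kl; set a := (k %% (2 * m))%N; set b := (l %% (2 * m))%N.
have lt_a : (a < 2 * m)%N by rewrite ltn_pmod //; lia.
have lt_b : (b < 2 * m)%N by rewrite ltn_pmod //; lia.
have div_ab : (2 * Z.of_nat m | pos m e0 b - pos m e0 a)%Z.
  rewrite (_ : pos m e0 b - pos m e0 a = (pos m e0 l - pos m e0 k)
             - (pos m e0 l - pos m e0 b) + (pos m e0 k - pos m e0 a))%Z; last ring.
  by apply: Z.divide_add_r; [apply: Z.divide_sub_r|]; try exact: div_kl;
    apply: pos_pattern0_mod.
case: (ltngtP a b) => [lt_ab|lt_ba|ab].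
- by apply: (pos_pattern0_period_inj a b); [lia|].
- apply: (pos_pattern0_period_inj b a); first lia.
  by rewrite (_ : pos m e0 a - pos m e0 b = - (pos m e0 b - pos m e0 a))%Z;
    [apply/Z.divide_opp_r|ring].
- exact: (modn_window_neq (2 * m) k l).
Qed.

Lemma pos_pattern p k : (p < 2 * m)%N ->
  pos m (pattern m p) k = (pos m e0 (k + (2 * m - p)) - pos m e0 (2 * m - p))%Z.
Proof.
move=> lt_p; rewrite /pos (eq_walk _ (fun i => e0 (i + (2 * m - p))%N)) ?walk_shift.
  by rewrite Nat2Z.inj_add; ring.
by move=> i _; apply: pattern_shift.
Qed.

Lemma pattern_admissible p : (p < 2 * m)%N -> admissible m (pattern m p).
Proof.
move=> lt_p; split; [exact: pattern_bounded p|exact: pattern_periodic p| |].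
- move=> k l lt_kl; rewrite (pos_pattern p l) // (pos_pattern p k) //.
  rewrite (_ : _ - _ = pos m e0 (l + (2 * m - p)) - pos m e0 (k + (2 * m - p)))%Z; last ring.
  by apply: pos_pattern0_inj; lia.
- exists 0%Z; rewrite (eq_walk _ (fun i => e0 (i + (2 * m - p))%N)) ?walk_shift.
    by rewrite addnC walk_pattern0_periodic; lia.
  by move=> i _; apply: pattern_shift.
Qed.

Lemma pattern_from_start p d : (p < 2 * m)%N ->
  pattern m p (p + d) = pattern_base m (d %% (2 * m)).
Proof. by move=> lt_p; rewrite /pattern -addnA addnCA subnKC ?modnDr // ltnW. Qed.

Lemma pattern_start p : (p < 2 * m)%N -> pattern m p p = 0%Z.
Proof. by move=> lt_p; rewrite -{2}(addn0 p) pattern_from_start ?mod0n. Qed.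

Lemma pattern_inj p q : (p < 2 * m)%N -> (q < 2 * m)%N -> pattern m p =1 pattern m q -> p = q.
Proof.
wlog le_qp : p q / (q <= p)%N.
  move=> wlog_pq lt_p lt_q E; case: (leqP q p) => [le_qp|/ltnW le_pq]; first exact: wlog_pq.
  by apply/esym/wlog_pq => // k; rewrite E.
move=> lt_p lt_q E; move: (E p) (E p.+1).
rewrite pattern_start // -addn1 pattern_from_start // (modn_small (_ : 1 < 2 * m)%N); last lia.
move: (p - q)%N (subnKC le_qp) => d pE; subst p.
have lt_d : (d < 2 * m)%N by lia.
rewrite -addnA !pattern_from_start // (modn_small lt_d).
case: (pattern_baseP m d lt_d) => [[-> _]|[_ ->]|[-> _]|[_ ->]]; try lia.
by rewrite modn_small /pattern_base; try lia; repeat case: ifP => ?; lia.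
Qed.

End Patterns.

Section ConstantSteps.
Variables (m : nat) (z : Z).
Hypothesis z_unit : z = 1%Z \/ z = (-1)%Z.

Lemma pos_const k : pos m (fun=> z) k = (Z.of_nat k * (Z.of_nat m + z))%Z.
Proof. by rewrite /pos walk_const; ring. Qed.

(* For [m = 2t], [(m + z)^2 = 4t (t + z) + 1], so [d (m + z) = 4t q] forces [4t | d]. *)
Lemma const_admissible : (0 < m)%N -> ~~ odd m -> admissible m (fun=> z).
Proof.
move=> m_gt0 m_even; split=> //; first by move=> k; lia.
- move=> k l lt_kl [q]; rewrite !pos_const => Eq.
  have [t m2t] : exists t, m = (2 * t)%N.
    by exists m./2; rewrite mul2n even_halfK.
  have Ed : ((Z.of_nat l - Z.of_nat k) * (2 * Z.of_nat t + z) = q * (4 * Z.of_nat t))%Z.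
    by rewrite m2t in Eq; lia.
  set d := (Z.of_nat l - Z.of_nat k)%Z in Ed.
  have d_pos : (0 < d < 4 * Z.of_nat t)%Z by rewrite /d; lia.
  have E : (d = (4 * Z.of_nat t) * ((2 * Z.of_nat t + z) * q - (Z.of_nat t + z) * d))%Z.
    by case: z_unit => z1; subst z; nia.
  by case: (Z.lt_total ((2 * Z.of_nat t + z) * q - (Z.of_nat t + z) * d) 0) => [|[]]; nia.
- by exists z; rewrite walk_const; lia.
Qed.

Lemma odd_const_pos_period : odd m ->
  (2 * Z.of_nat m | pos m (fun=> z) m - pos m (fun=> z) 0)%Z.
Proof.
move=> m_odd; have [t m2t1] : exists t, m = (2 * t).+1.
  by exists m./2; rewrite mul2n odd_halfK // prednK // odd_gt0.
rewrite !pos_const m2t1; case: z_unit => ->; [exists (Z.of_nat t + 1)%Z|exists (Z.of_nat t)%Z]; lia.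
Qed.

End ConstantSteps.

(* [i < 2 m] indexes the rotations of [pattern], [2 m] and [2 m + 1] the constant
   steps, which are admissible only for even [m]. *)
Definition step_family (m i : nat) : nat -> Z :=
  if (i < 2 * m)%N then pattern m i else if i == 2 * m then (fun=> 1%Z) else (fun=> (-1)%Z).

Definition nfamilies (m : nat) : nat := 2 * m + (if odd m then 0 else 2).

Section Families.
Variable m : nat.
Hypothesis m_ge3 : (3 <= m)%N.

Lemma step_family_admissible i : (i < nfamilies m)%N -> admissible m (step_family m i).
Proof.
rewrite /nfamilies /step_family => lt_i; case: ifP => [lt_i2m|ge_i2m].
  exact: pattern_admissible.
have m_even : ~~ odd m by move: lt_i; case: (odd m); lia.
by case: ifP => _; apply: const_admissible; [left|lia|exact: m_even|right|lia|exact: m_even].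
Qed.

Lemma step_family_inj i j : (i < nfamilies m)%N -> (j < nfamilies m)%N ->
  step_family m i =1 step_family m j -> i = j.
Proof.
rewrite /nfamilies => lt_i lt_j E.
have {lt_i lt_j}[lt_i lt_j] : (i < 2 * m + 2)%N /\ (j < 2 * m + 2)%N by case: ifP lt_i lt_j; lia.
have family_const k : (2 * m <= k)%N ->
    step_family m k = if k == 2 * m then (fun=> 1%Z) else (fun=> (-1)%Z).
  by rewrite /step_family ltnNge => ->.
have family_pattern k : (k < 2 * m)%N -> step_family m k = pattern m k.
  by rewrite /step_family => ->.
case: (ltnP i (2 * m)) => [lt_i2m|ge_i2m]; case: (ltnP j (2 * m)) => [lt_j2m|ge_j2m].
- by apply: (pattern_inj m m_ge3 i j lt_i2m lt_j2m) => k; move: (E k); rewrite !family_pattern.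
- move: (E i); rewrite (family_pattern i) // (family_const j) //.
  by rewrite (pattern_start m i) //; case: ifP.
- move: (E j); rewrite (family_pattern j) // (family_const i) //.
  by rewrite (pattern_start m j) //; case: ifP.
- by move: (E 0%N); rewrite (family_const i) // (family_const j) //; do 2 case: eqP => ? /=; lia.
Qed.

Lemma admissible_step_family e : admissible m e ->
  (forall y, exists2 k, (k < 2 * m)%N & (Z.of_nat m | walk e k - y)%Z) ->
  exists2 i, (i < nfamilies m)%N & e =1 step_family m i.
Proof.
move=> e_adm walk_onto; have [_ _ pos_inj _] := e_adm.
have const_even z : e =1 (fun=> z) -> z = 1%Z \/ z = (-1)%Z -> ~~ odd m.
  move=> ez z_unit; apply/negP => m_odd; apply: (pos_inj 0%N m); first lia.
  have pos_ez k : pos m e k = pos m (fun=> z) k.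
    by rewrite /pos (eq_walk e (fun=> z)) // => i _; apply: ez.
  by rewrite !pos_ez; apply: odd_const_pos_period.
have nfam_even : ~~ odd m -> nfamilies m = (2 * m).+2 by rewrite /nfamilies => /negbTE ->; lia.
case: (steps_classification m e m_ge3 e_adm walk_onto) => [e1|em1|[p lt_p ep]].
- have m_even := const_even _ e1 (or_introl erefl).
  by exists (2 * m); rewrite ?nfam_even // => k; rewrite /step_family ltnn eqxx e1.
- have m_even := const_even _ em1 (or_intror erefl).
  exists (2 * m).+1; rewrite ?nfam_even // => k.
  have ne_2m : (2 * m).+1 != 2 * m by lia.
  by rewrite /step_family ltnNge leqnSn (negbTE ne_2m) em1.
- by exists p; [rewrite /nfamilies; lia|move=> k; rewrite /step_family lt_p ep].
Qed.

End Families.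

(** * Rows and squares *)

Definition ord_mod {n : nat} (n_gt0 : (0 < n)%N) (k : nat) : 'I_n := Ordinal (ltn_pmod k n_gt0).

Definition fwd_dist (n a b : nat) : nat := ((b + n - a) %% n)%N.

Lemma sdistE n a b : sdist n a b = minn (fwd_dist n b a) (fwd_dist n a b).
Proof. by []. Qed.

Lemma sdistC n a b : sdist n a b = sdist n b a.
Proof. by rewrite /sdist minnC. Qed.

Lemma fwd_distP {n a b : nat} : (a < n)%N -> (b < n)%N -> (fwd_dist n a b < n)%N /\
  (Z.of_nat (fwd_dist n a b) = Z.of_nat b - Z.of_nat a \/
   Z.of_nat (fwd_dist n a b) = Z.of_nat b - Z.of_nat a + Z.of_nat n)%Z.
Proof.
rewrite /fwd_dist => lt_an lt_bn; have [le_ab|lt_ba] := leqP a b.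
  by rewrite (_ : b + n - a = b - a + n)%N ?modnDr ?modn_small; lia.
by rewrite modn_small; lia.
Qed.

Lemma bigminn_geP (I : finType) (P : pred I) (F : I -> nat) x N :
  reflect ((x <= N)%N /\ forall i, P i -> (x <= F i)%N) (x <= \big[minn/N]_(i | P i) F i)%N.
Proof. exact: (@Order.TotalTheory.bigmin_geP _ nat I N x P F). Qed.

Definition adjacent_dist_ge {n : nat} (L : 'M['I_n]_n) (x : nat) : Prop :=
  (forall i j j' : 'I_n, j' = j.+1 :> nat -> (x <= sdist n (L i j) (L i j'))%N) /\
  (forall i i' j : 'I_n, i' = i.+1 :> nat -> (x <= sdist n (L i j) (L i' j))%N).

Lemma inner_distance_ge n (L : 'M['I_n]_n) x : (x <= n)%N ->
  (x <= inner_distance L)%N <-> adjacent_dist_ge L x.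
Proof.
move=> le_xn; split=> [/bigminn_geP [_ dist_L]|[dist_row dist_col]].
  have dist_ij (i j : 'I_n) : (x <= minn
      (\big[minn/n]_(j' | val j' == j.+1) sdist n (L i j) (L i j'))
      (\big[minn/n]_(i' | val i' == i.+1) sdist n (L i j) (L i' j)))%N.
    by have /bigminn_geP [_ row_ge] := dist_L i isT; apply: row_ge.
  split=> [i j j' jj'|i i' j ii']; have := dist_ij i j; rewrite leq_min => /andP [+ +].
  - by move=> /bigminn_geP [_ row_ge] _; apply: row_ge; apply/eqP.
  - by move=> _ /bigminn_geP [_ col_ge]; apply: col_ge; apply/eqP.
apply/bigminn_geP; split=> // i _; apply/bigminn_geP; split=> // j _; rewrite leq_min.
by apply/andP; split; apply/bigminn_geP; split=> // k /eqP; [apply: dist_row|apply: dist_col].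
Qed.

Section Rows.
Variables (n m : nat).
Hypothesis n_eq : n = (2 * m)%N.
Hypothesis m_ge3 : (3 <= m)%N.

Let n_gt0 : (0 < n)%N. Proof. lia. Qed.
Local Notation ordn := (ord_mod n_gt0).

Lemma val_ordn k : (ordn k : nat) = k %% n.
Proof. by []. Qed.

Lemma ordn_val (o : 'I_n) : ordn o = o.
Proof. by apply: ord_inj; rewrite val_ordn modn_small. Qed.

Lemma eq_ordn a b : ordn a = ordn b <-> a = b %[mod n].
Proof. by split=> [/(congr1 val)|eq_ab]; last apply: ord_inj. Qed.

Lemma eq_ordnZ a b :
  ordn a = ordn b <-> exists q, Z.of_nat a = (Z.of_nat b + q * Z.of_nat n)%Z.
Proof.
rewrite eq_ordn; split=> [E|[q E]].
  exists (Z.of_nat (a %/ n) - Z.of_nat (b %/ n))%Z.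
  by have := divn_eq a n; have := divn_eq b n; rewrite E; lia.
case: (Z.le_gt_cases 0 q) => q_ge0.
  by rewrite (_ : a = Z.to_nat q * n + b)%N ?modnMDl //; nia.
by rewrite (_ : b = Z.to_nat (- q) * n + a)%N ?modnMDl //; nia.
Qed.

Lemma ordn_add_period k : ordn (k + n) = ordn k.
Proof. by apply/eq_ordn; rewrite modnDr. Qed.

Lemma ordn_window_neq k l : (k < l < k + n)%N -> ordn l <> ordn k.
Proof.
by move=> lt_kl /eq_ordn E; apply: (modn_window_neq n k l lt_kl).
Qed.

(* [f (k + 1) = f k + m + excess f k] modulo [n]. *)
Definition excess (f : 'I_n -> 'I_n) (k : nat) : Z :=
  (Z.of_nat (fwd_dist n (f (ordn k)) (f (ordn k.+1))) - Z.of_nat m)%Z.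

Definition cyclic_dist_ge (f : 'I_n -> 'I_n) (x : nat) : Prop :=
  forall k, (x <= sdist n (f (ordn k)) (f (ordn k.+1)))%N.

Definition good_row (f : 'I_n -> 'I_n) : Prop :=
  [/\ injective f, f (ordn 0) = ordn 0 & cyclic_dist_ge f (m - 1)].

Lemma excess_periodic (f : 'I_n -> 'I_n) k : excess f (k + 2 * m) = excess f k.
Proof. by rewrite /excess -n_eq ordn_add_period -addSn ordn_add_period. Qed.

Lemma excess_step (f : 'I_n -> 'I_n) k :
  (Z.of_nat (f (ordn k.+1)) = Z.of_nat (f (ordn k)) + Z.of_nat m + excess f k \/
   Z.of_nat (f (ordn k.+1)) = Z.of_nat (f (ordn k)) + Z.of_nat m + excess f k - Z.of_nat n)%Z.
Proof.
have [_] := fwd_distP (ltn_ord (f (ordn k))) (ltn_ord (f (ordn k.+1))).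
by rewrite /excess; lia.
Qed.

Lemma cyclic_dist_ge_excess (f : 'I_n -> 'I_n) x : (x <= m)%N -> cyclic_dist_ge f x <->
  forall k, (Z.of_nat x - Z.of_nat m <= excess f k <= Z.of_nat m - Z.of_nat x)%Z.
Proof.
move=> le_xm; have dist_excess k : (x <= sdist n (f (ordn k)) (f (ordn k.+1)))%N <->
    (Z.of_nat x - Z.of_nat m <= excess f k <= Z.of_nat m - Z.of_nat x)%Z.
  rewrite sdistE /excess leq_min.
  have := fwd_distP (ltn_ord (f (ordn k))) (ltn_ord (f (ordn k.+1))).
  have := fwd_distP (ltn_ord (f (ordn k.+1))) (ltn_ord (f (ordn k))).
  have := ltn_ord (f (ordn k)); have := ltn_ord (f (ordn k.+1)).
  by move=> ? ? [? ?] [? ?]; split=> [/andP []|?]; [|apply/andP; split]; lia.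
by split=> dist_f k; apply/dist_excess.
Qed.

Lemma row_pos (f : 'I_n -> 'I_n) : f (ordn 0) = ordn 0 ->
  forall k, exists q, Z.of_nat (f (ordn k)) = (pos m (excess f) k + q * Z.of_nat n)%Z.
Proof.
move=> f0; elim=> [|k [q IH]]; first by exists 0%Z; rewrite f0 val_ordn mod0n /pos /=.
by case: (excess_step f k) => ->; [exists q|exists (q - 1)%Z]; rewrite IH /pos walkS; lia.
Qed.

Section GoodRow.
Variable f : 'I_n -> 'I_n.
Hypothesis f_good : good_row f.

Lemma good_row_excess_bounded k : (-1 <= excess f k <= 1)%Z.
Proof.
have [_ _ dist_f] := f_good.
by have := (cyclic_dist_ge_excess f _ (leq_subr 1 m)).1 dist_f k; lia.
Qed.

Lemma good_row_pos_inj k l : (k < l < k + 2 * m)%N ->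
  ~ (2 * Z.of_nat m | pos m (excess f) l - pos m (excess f) k)%Z.
Proof.
move=> lt_kl [q Eq]; have [f_inj f0 _] := f_good.
have [qk Ek] := row_pos f f0 k; have [ql El] := row_pos f f0 l.
have fl_fk : f (ordn l) = f (ordn k).
  apply: ord_inj; apply: Nat2Z.inj.
  have := ltn_ord (f (ordn k)); have := ltn_ord (f (ordn l)) => ? ?.
  suff : (Z.of_nat (f (ordn l)) - Z.of_nat (f (ordn k)) = 0)%Z by lia.
  by apply: (Zmult_small_eq0 _ (q + ql - qk) (Z.of_nat n)); nia.
by move/f_inj: fl_fk; apply: ordn_window_neq; lia.
Qed.

Lemma good_row_walk_period : (2 * Z.of_nat m | walk (excess f) (2 * m))%Z.
Proof.
have [_ f0 _] := f_good; have [q] := row_pos f f0 (0 + 2 * m).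
rewrite -{1}n_eq ordn_add_period f0 val_ordn mod0n add0n /pos => Eq.
by exists (- q - Z.of_nat m)%Z; nia.
Qed.

Lemma good_row_walk_onto y :
  exists2 k, (k < 2 * m)%N & (Z.of_nat m | walk (excess f) k - y)%Z.
Proof.
have [f_inj f0 _] := f_good.
have n_gt0Z : (0 < Z.of_nat n)%Z by lia.
have [y_ge0 y_lt] := Z.mod_pos_bound y _ n_gt0Z.
have y_div := Z.div_mod y _ (Z.neq_sym _ _ (Z.lt_neq _ _ n_gt0Z)).
have lt_y : (Z.to_nat (y mod Z.of_nat n) < n)%N by lia.
have /codomP [j fj] : Ordinal lt_y \in codom f by apply: inj_card_onto.
have [q] := row_pos f f0 j; rewrite ordn_val -fj /= /pos => Eq.
exists j; first by rewrite -n_eq.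
by exists (- 2 * (y / Z.of_nat n) - Z.of_nat j - 2 * q)%Z; nia.
Qed.

Lemma good_row_dist_lt_m : ~ cyclic_dist_ge f m.
Proof.
move=> /(cyclic_dist_ge_excess f m (leqnn m)) excess0; have [f_inj f0 _] := f_good.
have [q] := row_pos f f0 2; rewrite /pos !walkS [walk _ 0]/= => E.
have f2 : f (ordn 2) = f (ordn 0).
  apply: ord_inj; rewrite f0 val_ordn mod0n; apply: Nat2Z.inj.
  have := ltn_ord (f (ordn 2)); have := excess0 0; have := excess0 1.
  by move=> ? ? ?; apply: (Zmult_small_eq0 _ (q + 1) (Z.of_nat n)); nia.
by move/f_inj: f2; apply: ordn_window_neq; lia.
Qed.

Lemma good_row_admissible : admissible m (excess f).
Proof.
split; [exact: good_row_excess_bounded|exact: excess_periodic|exact: good_row_pos_inj|].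
exact: good_row_walk_period.
Qed.

End GoodRow.

Definition row_of_steps (e : nat -> Z) (o : 'I_n) : 'I_n :=
  ordn (Z.to_nat (pos m e o mod Z.of_nat n)).

Lemma good_rowE f : good_row f -> f =1 row_of_steps (excess f).
Proof.
move=> [_ f0 _] o; apply: ord_inj; rewrite val_ordn.
have [q] := row_pos f f0 o; rewrite ordn_val => Eq.
rewrite -(Z.mod_unique _ _ (- q) (Z.of_nat (f o))); [|left; have := ltn_ord (f o)|]; try lia.
by rewrite Nat2Z.id modn_small.
Qed.

Lemma eq_row_of_steps e e' : (forall i, (i < n)%N -> e i = e' i) ->
  row_of_steps e =1 row_of_steps e'.
Proof.
move=> ee' o; rewrite /row_of_steps /pos (eq_walk e e') // => i lt_io.
by apply: ee'; apply: ltn_trans (ltn_ord o).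
Qed.

Section RowOfSteps.
Variable e : nat -> Z.
Hypothesis e_adm : admissible m e.

Let e_bounded : forall k, (-1 <= e k <= 1)%Z. Proof. by case: e_adm. Defined.
Let e_periodic : forall k, e (k + 2 * m)%N = e k. Proof. by case: e_adm. Defined.
Let pos_inj : forall k l, (k < l < k + 2 * m)%N ->
  ~ (2 * Z.of_nat m | pos m e l - pos m e k)%Z.
Proof. by case: e_adm. Defined.
Let walk_period : (2 * Z.of_nat m | walk e (2 * m))%Z. Proof. by case: e_adm. Defined.

Lemma pos_add_periods q r :
  exists t, pos m e (r + q * (2 * m)) = (pos m e r + t * (2 * Z.of_nat m))%Z.
Proof.
case: walk_period => c Ec.
elim: q => [|q [t IH]]; first by exists 0%Z; rewrite mul0n addn0; lia.
exists (t + Z.of_nat m + c)%Z; rewrite mulSnr addnA.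
by move: IH; rewrite /pos (walk_add_period e (2 * m) e_periodic); nia.
Qed.

Lemma row_of_stepsP k :
  exists t, Z.of_nat (row_of_steps e (ordn k)) = (pos m e k + t * Z.of_nat n)%Z.
Proof.
have n_gt0Z : (0 < Z.of_nat n)%Z by lia.
have [t Et] := pos_add_periods (k %/ n) (k %% n).
rewrite -n_eq addnC -divn_eq in Et.
have [lo hi] := Z.mod_pos_bound (pos m e (k %% n)) _ n_gt0Z.
have E := Z.div_mod (pos m e (k %% n)) _ (Z.neq_sym _ _ (Z.lt_neq _ _ n_gt0Z)).
exists (- (pos m e (k %% n) / Z.of_nat n) - t)%Z.
rewrite /row_of_steps val_ordn val_ordn (modn_small (_ : _ < n)%N); nia.
Qed.

Lemma excess_row_of_steps k : excess (row_of_steps e) k = e k.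
Proof.
have [t1 E1] := row_of_stepsP k; have [t2 E2] := row_of_stepsP k.+1.
have [lt_d D] :=
  fwd_distP (ltn_ord (row_of_steps e (ordn k))) (ltn_ord (row_of_steps e (ordn k.+1))).
have pos_step : (pos m e k.+1 = pos m e k + Z.of_nat m + e k)%Z by rewrite /pos walkS; lia.
have := e_bounded k; rewrite /excess => e_k.
suff : (Z.of_nat (fwd_dist n (row_of_steps e (ordn k)) (row_of_steps e (ordn k.+1)))
        - (Z.of_nat m + e k) = 0)%Z by lia.
by case: D => D; [apply: (Zmult_small_eq0 _ (t2 - t1) (Z.of_nat n))
                 |apply: (Zmult_small_eq0 _ (t2 - t1 + 1) (Z.of_nat n))]; nia.
Qed.

Lemma row_of_steps_inj : injective (row_of_steps e).
Proof.
suff lt_neq (o1 o2 : 'I_n) : (o1 < o2)%N -> row_of_steps e o1 <> row_of_steps e o2.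
  by move=> o1 o2 E; case: (ltngtP o1 o2) => [/lt_neq|/lt_neq|/ord_inj] //; rewrite E.
move=> lt_o12 E; have [t1 E1] := row_of_stepsP o1; have [t2 E2] := row_of_stepsP o2.
rewrite !ordn_val E in E1 E2.
apply: (pos_inj o1 o2); first by have := ltn_ord o2; lia.
by exists (t1 - t2)%Z; nia.
Qed.

Lemma row_of_steps0 : row_of_steps e (ordn 0) = ordn 0.
Proof. by apply: ord_inj; rewrite /row_of_steps !val_ordn !mod0n. Qed.

Lemma good_row_of_steps : good_row (row_of_steps e).
Proof.
split; [exact: row_of_steps_inj|exact: row_of_steps0|].
apply/(cyclic_dist_ge_excess _ _ (leq_subr 1 m)) => k.
by rewrite excess_row_of_steps; have := e_bounded k; lia.
Qed.

End RowOfSteps.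

Lemma eq_excess f g : f =1 g -> excess f =1 excess g.
Proof. by move=> fg k; rewrite /excess !fg. Qed.

Lemma good_row_family f : good_row f ->
  exists2 i, (i < nfamilies m)%N & f =1 row_of_steps (step_family m i).
Proof.
move=> f_good; have [i lt_i excess_i] := admissible_step_family m m_ge3 (excess f)
  (good_row_admissible f f_good) (good_row_walk_onto f f_good).
by exists i => // o; rewrite (good_rowE f f_good) (eq_row_of_steps _ (step_family m i)).
Qed.

Lemma good_row_of_family i : (i < nfamilies m)%N -> good_row (row_of_steps (step_family m i)).
Proof. by move/(step_family_admissible m m_ge3); apply: good_row_of_steps. Qed.

Lemma row_of_family_inj i j : (i < nfamilies m)%N -> (j < nfamilies m)%N ->
  row_of_steps (step_family m i) =1 row_of_steps (step_family m j) -> i = j.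
Proof.
move=> lt_i lt_j E; apply: (step_family_inj m m_ge3 i j lt_i lt_j) => k.
rewrite -(excess_row_of_steps _ (step_family_admissible m m_ge3 i lt_i)).
by rewrite -(excess_row_of_steps _ (step_family_admissible m m_ge3 j lt_j)) (eq_excess _ _ E k).
Qed.


(** * Circulant and back-circulant squares *)

Definition circ_of_row (f : 'I_n -> 'I_n) : 'M['I_n]_n := \matrix_(i, j) f (ordn (j + n - i)).
Definition bcirc_of_row (f : 'I_n -> 'I_n) : 'M['I_n]_n := \matrix_(i, j) f (ordn (i + j)).

Lemma circ_of_row0 f o : circ_of_row f (ordn 0) o = f o.
Proof.
rewrite mxE val_ordn mod0n subn0; congr f; apply: ord_inj.
by rewrite val_ordn modnDr modn_small.
Qed.

Lemma bcirc_of_row0 f o : bcirc_of_row f (ordn 0) o = f o.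
Proof. by rewrite mxE val_ordn mod0n add0n ordn_val. Qed.

Lemma latin_circ_of_row f : injective f -> latin (circ_of_row f).
Proof.
move=> f_inj; apply/andP; split; apply/forallP => a; apply/injectiveP => b1 b2;
  rewrite !mxE => /f_inj /eq_ordnZ [c E]; apply: ord_inj;
  have := ltn_ord a; have := ltn_ord b1; have := ltn_ord b2 => ? ? ?.
- suff : (Z.of_nat b1 - Z.of_nat b2 = 0)%Z by lia.
  by apply: (Zmult_small_eq0 _ c (Z.of_nat n)); lia.
- suff : (Z.of_nat b2 - Z.of_nat b1 = 0)%Z by lia.
  by apply: (Zmult_small_eq0 _ c (Z.of_nat n)); lia.
Qed.

Lemma latin_bcirc_of_row f : injective f -> latin (bcirc_of_row f).
Proof.
move=> f_inj; apply/andP; split; apply/forallP => a; apply/injectiveP => b1 b2;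
  rewrite !mxE => /f_inj /eq_ordnZ [c E]; apply: ord_inj;
  have := ltn_ord a; have := ltn_ord b1; have := ltn_ord b2 => ? ? ?;
  suff : (Z.of_nat b1 - Z.of_nat b2 = 0)%Z by lia.
all: by apply: (Zmult_small_eq0 _ c (Z.of_nat n)); lia.
Qed.

Lemma circulant_circ_of_row f : circulant (circ_of_row f).
Proof.
apply/forallP => i; apply/forallP => i'; apply/forallP => j; apply/forallP => j'.
apply/implyP => /andP [/eqP ii0 /eqP jj0]; rewrite !mxE; apply/eqP; congr f.
have ii' : (i' : nat) = i.+1 := ii0; have jj' : (j' : nat) = j.+1 %% n := jj0.
have := divn_eq j.+1 n; rewrite -jj' => E.
apply/eq_ordnZ; exists (- Z.of_nat (j.+1 %/ n))%Z; have := ltn_ord i'; have := ltn_ord j; lia.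
Qed.

Lemma back_circulant_bcirc_of_row f : back_circulant (bcirc_of_row f).
Proof.
apply/forallP => i; apply/forallP => i'; apply/forallP => j; apply/forallP => j'.
apply/implyP => /andP [/eqP ii0 /eqP jj0]; rewrite !mxE; apply/eqP; congr f.
have ii' : (i' : nat) = i.+1 := ii0; have jj' : (j' : nat) = j.+1 %% n := jj0.
have := divn_eq j.+1 n; rewrite -jj' => E.
by apply/eq_ordnZ; exists (Z.of_nat (j.+1 %/ n)); lia.
Qed.

Lemma circulantP L : circulant L -> forall i i' j j' : 'I_n,
  i' = i.+1 :> nat -> j' = j.+1 %% n :> nat -> L i' j' = L i j.
Proof.
move=> L_circ i i' j j' ii' jj'.
move/forallP/(_ i)/forallP/(_ i')/forallP/(_ j)/forallP/(_ j')/implyP: L_circ => L_ij.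
by apply/eqP/L_ij/andP; split; apply/eqP.
Qed.

Lemma back_circulantP L : back_circulant L -> forall i i' j j' : 'I_n,
  i' = i.+1 :> nat -> j' = j.+1 %% n :> nat -> L i' j = L i j'.
Proof.
move=> L_circ i i' j j' ii' jj'.
move/forallP/(_ i)/forallP/(_ i')/forallP/(_ j)/forallP/(_ j')/implyP: L_circ => L_ij.
by apply/eqP/L_ij/andP; split; apply/eqP.
Qed.

Lemma circulantE L : circulant L -> L = circ_of_row (fun j => L (ordn 0) j).
Proof.
move=> L_circ.
suff L_ij t (i j : 'I_n) : i = t :> nat -> L i j = L (ordn 0) (ordn (j + n - i)).
  by apply/matrixP => i j; rewrite mxE (L_ij i).
elim: t i j => [|t IH] i j it.
  have -> : i = ordn 0 by apply: ord_inj; rewrite val_ordn mod0n.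
  by rewrite val_ordn mod0n subn0 ordn_add_period ordn_val.
have lt_tn : (t < n)%N by have := ltn_ord i; lia.
have i0t : (ordn t : nat) = t by rewrite val_ordn modn_small.
have j_j0 : (j : nat) = (ordn (j + n - 1)).+1 %% n.
  by rewrite val_ordn -addn1 modnDml subnK ?modnDr ?modn_small //; lia.
rewrite (circulantP _ L_circ (ordn t) i (ordn (j + n - 1)) j) ?i0t // (IH _ _ i0t) i0t.
congr (L _ _); apply/eq_ordnZ; exists (1 - Z.of_nat ((j + n - 1) %/ n))%Z.
by rewrite val_ordn; have := divn_eq (j + n - 1) n; have := ltn_ord j; lia.
Qed.

Lemma back_circulantE L : back_circulant L -> L = bcirc_of_row (fun j => L (ordn 0) j).
Proof.
move=> L_circ.
suff L_ij t (i j : 'I_n) : i = t :> nat -> L i j = L (ordn 0) (ordn (i + j)).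
  by apply/matrixP => i j; rewrite mxE (L_ij i).
elim: t i j => [|t IH] i j it.
  have -> : i = ordn 0 by apply: ord_inj; rewrite val_ordn mod0n.
  by rewrite val_ordn mod0n add0n ordn_val.
have lt_tn : (t < n)%N by have := ltn_ord i; lia.
have i0t : (ordn t : nat) = t by rewrite val_ordn modn_small.
rewrite (back_circulantP _ L_circ (ordn t) i j (ordn j.+1)) ?i0t // (IH _ _ i0t) i0t.
congr (L _ _); apply/eq_ordnZ; exists (- Z.of_nat (j.+1 %/ n))%Z.
by rewrite val_ordn; have := divn_eq j.+1 n; lia.
Qed.

Lemma adjacent_circ_of_row f x : adjacent_dist_ge (circ_of_row f) x <-> cyclic_dist_ge f x.
Proof.
split=> [[dist_row _] k|dist_f]; last first.
  split=> [i j j' jj'|i i' j ii']; rewrite !mxE.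
  - by rewrite (_ : j' + n - i = (j + n - i).+1)%N; [apply: dist_f|have := ltn_ord i; lia].
  - by rewrite sdistC (_ : j + n - i = (j + n - i').+1)%N; [apply: dist_f|have := ltn_ord i'; lia].
set i := ordn (n - k %% n); have le_in : (i <= n)%N by apply: ltnW.
have ni_k : ((n - i) %% n = k %% n)%N.
  rewrite val_ordn; have [r0|r_pos] := posnP (k %% n); first by rewrite r0 subn0 modnn subn0 modnn.
  by rewrite (modn_small (_ : n - k %% n < n)%N) ?subKn ?modn_mod //; lia.
have ordn_shift d : ordn (d + n - i) = ordn (d + k).
  by apply/eq_ordn; rewrite -(addnBA _ le_in) -modnDmr ni_k modnDmr.
have := dist_row i (ordn 0) (ordn 1); rewrite !mxE !val_ordn mod0n modn_small; last lia.
by rewrite !ordn_shift add0n add1n; apply.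
Qed.

Lemma adjacent_bcirc_of_row f x : adjacent_dist_ge (bcirc_of_row f) x <-> cyclic_dist_ge f x.
Proof.
split=> [[dist_row _] k|dist_f]; last first.
  split=> [i j j' jj'|i i' j ii']; rewrite !mxE.
  - by rewrite (_ : i + j' = (i + j).+1)%N; [apply: dist_f|lia].
  - by rewrite (_ : i' + j = (i + j).+1)%N; [apply: dist_f|lia].
have := dist_row (ordn k) (ordn 0) (ordn 1); rewrite !mxE !val_ordn mod0n modn_small; last lia.
have ordn_shift d : ordn (k %% n + d) = ordn (k + d) by apply/eq_ordn; rewrite modnDml.
by rewrite !ordn_shift addn0 addn1; apply.
Qed.

Lemma val_ordn0 : val (ordn 0) = 0.
Proof. exact: mod0n. Qed.

Lemma half_n : n./2 = m.
Proof. by rewrite n_eq mul2n doubleK. Qed.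

Section SquaresOfRows.
Variables (sq : ('I_n -> 'I_n) -> 'M['I_n]_n) (shape : pred 'M['I_n]_n).
Hypothesis sq_row0 : forall f o, sq f (ordn 0) o = f o.
Hypothesis eq_sq : forall f g, f =1 g -> sq f = sq g.
Hypothesis latin_sq : forall f, injective f -> latin (sq f).
Hypothesis shape_sq : forall f, shape (sq f).
Hypothesis shapeE : forall L, shape L -> L = sq (fun j => L (ordn 0) j).
Hypothesis adjacent_sq : forall f x, adjacent_dist_ge (sq f) x <-> cyclic_dist_ge f x.

Lemma inner_distance_sq f : good_row f -> inner_distance (sq f) = n./2 - 1.
Proof.
move=> f_good; have [_ _ dist_f] := f_good; rewrite half_n.
apply/eqP; rewrite eqn_leq; apply/andP; split.
  rewrite leqNgt; apply/negP => lt_dist; apply: (good_row_dist_lt_m f f_good).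
  by apply/adjacent_sq/inner_distance_ge; lia.
by apply/inner_distance_ge/adjacent_sq; first lia.
Qed.

Lemma one_at_corner_sq f : f (ordn 0) = ordn 0 -> one_at_corner (sq f).
Proof.
move=> f0; apply/forallP => i; apply/forallP => j; apply/implyP => /andP [/eqP i0 /eqP j0].
have -> : i = ordn 0 by apply: val_inj; rewrite i0 val_ordn0.
have -> : j = ordn 0 by apply: val_inj; rewrite j0 val_ordn0.
by rewrite sq_row0 f0 val_ordn0.
Qed.

Lemma good_row_square L :
  [&& latin L, shape L, inner_distance L == n./2 - 1 & one_at_corner L] ->
  good_row (fun j => L (ordn 0) j).
Proof.
case/and4P => /andP [/forallP /(_ (ordn 0)) /injectiveP row_inj _] L_shape /eqP dist_L corner.
split=> //.
  move/forallP/(_ (ordn 0))/forallP/(_ (ordn 0))/implyP: corner.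
  by rewrite val_ordn0 => /(_ isT) /eqP L00; apply: val_inj; rewrite L00 val_ordn0.
by apply/adjacent_sq; rewrite -shapeE //; apply/inner_distance_ge; rewrite ?dist_L ?half_n; lia.
Qed.

Lemma card_good_squares :
  #|[set L | [&& latin L, shape L, inner_distance L == n./2 - 1 & one_at_corner L]]| = nfamilies m.
Proof.
pose sq_of (i : 'I_(nfamilies m)) := sq (row_of_steps (step_family m i)).
have -> : [set L | [&& latin L, shape L, inner_distance L == n./2 - 1 & one_at_corner L]] =
          [set sq_of i | i : 'I_(nfamilies m)].
  apply/setP => L; rewrite inE; apply/idP/imsetP => [L_good|[i _ ->]].
    have [i lt_i row_i] := good_row_family _ (good_row_square L L_good).
    exists (Ordinal lt_i) => //; rewrite /sq_of -(eq_sq _ _ row_i) -shapeE //.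
    by case/and4P: L_good.
  have f_good := good_row_of_family i (ltn_ord i); have [f_inj f0 _] := f_good.
  by apply/and4P; split; [exact: latin_sq|exact: shape_sq|rewrite inner_distance_sq|
    exact: one_at_corner_sq].
rewrite card_imset ?card_ord // => i j E; apply: ord_inj.
apply: row_of_family_inj => // o.
by move/(congr1 (fun L : 'M['I_n]_n => L (ordn 0) o)): E; rewrite /sq_of !sq_row0.
Qed.

End SquaresOfRows.

Lemma card_circulant :
  #|[set L : 'M['I_n]_n | [&& latin L, circulant L, inner_distance L == n./2 - 1 &
                              one_at_corner L]]| = nfamilies m.
Proof.
apply: (card_good_squares circ_of_row).
- exact: circ_of_row0.
- by move=> f g fg; apply/matrixP => i j; rewrite !mxE fg.
- exact: latin_circ_of_row.
- exact: circulant_circ_of_row.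
- exact: circulantE.
- exact: adjacent_circ_of_row.
Qed.

Lemma card_back_circulant :
  #|[set L : 'M['I_n]_n | [&& latin L, back_circulant L, inner_distance L == n./2 - 1 &
                              one_at_corner L]]| = nfamilies m.
Proof.
apply: (card_good_squares bcirc_of_row).
- exact: bcirc_of_row0.
- by move=> f g fg; apply/matrixP => i j; rewrite !mxE fg.
- exact: latin_bcirc_of_row.
- exact: back_circulant_bcirc_of_row.
- exact: back_circulantE.
- exact: adjacent_bcirc_of_row.
Qed.

End Rows.

Theorem mainTheorem12 (n : nat) (Hn : 6 <= n) (Heven : ~~ odd n) :
  let C := #|[set L : 'M['I_n]_n | [&& latin L, circulant L,
                 inner_distance L == n./2 - 1 & one_at_corner L]]| in
  let B := #|[set L : 'M['I_n]_n | [&& latin L, back_circulant L,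
                 inner_distance L == n./2 - 1 & one_at_corner L]]| in
  (n %% 4 = 0 -> C = n + 2 /\ B = n + 2) /\
  (n %% 4 = 2 -> C = n /\ B = n).
Proof.
move=> C B.
have n_eq : n = (2 * n./2)%N by rewrite mul2n even_halfK.
have m_ge3 : (3 <= n./2)%N by lia.
rewrite /C /B (card_circulant _ _ n_eq m_ge3) (card_back_circulant _ _ n_eq m_ge3) /nfamilies -n_eq.
have := modn2 n./2; case: (odd n./2) => /= m_mod2; split=> n_mod4; lia.
Qed.
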